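(* Let $\alpha>0$, $\alpha\neq1$, and let $\rho,\sigma$ be density operators on a finite-dimensional Hilbert space with $\operatorname{supp}(\rho)\subseteq\operatorname{supp}(\sigma)$. Then $$S_{\alpha}(\rho\|\sigma)=\hat{D}_{1/\alpha}\big(\rho^{(\alpha)}\|\sigma^{(\alpha)}\big),$$ where $\rho^{(\alpha)}=\rho^{\alpha}/\operatorname{Tr}(\rho^{\alpha})$ and $\sigma^{(\alpha)}=\sigma^{\alpha}/\operatorname{Tr}(\sigma^{\alpha})$.
   Context: A density operator is a positive semidefinite operator of unit trace; $\operatorname{supp}$ denotes the span of eigenvectors with nonzero eigenvalues. The quantum relative $\alpha$-entropy is $S_{\alpha}(\rho\|\sigma)=\frac{\alpha}{1-\alpha}\log\operatorname{Tr}(\rho\sigma^{\alpha-1})-\frac{1}{1-\alpha}\log\operatorname{Tr}(\rho^{\alpha})+\log\operatorname{Tr}(\sigma^{\alpha})$ (negative powers of $\sigma$ taken on its support). The Petz–Rényi relative entropy of order $\beta>0$, $\beta\ne1$, is $\hat{D}_{\beta}(\rho\|\sigma)=\frac{1}{\beta-1}\log\operatorname{Tr}(\rho^{\beta}\sigma^{1-\beta})$. *)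

From HB Require Import structures.
From mathcomp Require Import all_boot all_order all_algebra.
From mathcomp Require Import complex.
From mathcomp Require Import reals exp.
Set Implicit Arguments. Unset Strict Implicit. Unset Printing Implicit Defensive.
Import Order.TTheory GRing.Theory Num.Theory.
Local Open Scope ring_scope.
Local Open Scope sesquilinear_scope.

Section QInfo.
Variable R : realType.
Local Notation C := R[i].

Definition psdmx n (A : 'M[C]_n) : Prop :=
  A \is hermsymmx /\ forall v : 'rV[C]_n, 0 <= (v *m A *m v ^t*) 0 0.

Definition density n (A : 'M[C]_n) : Prop := psdmx A /\ \tr A = 1.

Definition mxfun n (f : C -> C) (A : 'M[C]_n) : 'M[C]_n :=
  (spectralmx A) ^t* *m diag_mx (map_mx f (spectral_diag A)) *m spectralmx A.

(* real power A^p of a PSD matrix; 0^p = 0 for p <> 0 (powers taken on the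
   support), since powR 0 p = (p == 0)%:R *)
Definition rpowmx n (A : 'M[C]_n) (p : R) : 'M[C]_n :=
  mxfun (fun z : C => (((complex.Re z) `^ p)%:C)%C) A.

(* support: span of eigenvectors with nonzero eigenvalues
   (row-vector convention: v *m A = a *: v) *)
Definition supp n (A : 'M[C]_n) : 'M[C]_n :=
  (\sum_(i < n | spectral_diag A 0 i != 0) eigenspace A (spectral_diag A 0 i))%MS.

(* real part of the trace (the traces below are real numbers) *)
Definition trR n (A : 'M[C]_n) : R := complex.Re (\tr A).

Definition S_alpha n (a : R) (rho sigma : 'M[C]_n) : R :=
  a / (1 - a) * ln (trR (rho *m rpowmx sigma (a - 1)))
  - 1 / (1 - a) * ln (trR (rpowmx rho a))
  + ln (trR (rpowmx sigma a)).

Definition petzD n (b : R) (rho sigma : 'M[C]_n) : R :=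
  1 / (b - 1) * ln (trR (rpowmx rho b *m rpowmx sigma (1 - b))).

Definition escort n (a : R) (rho : 'M[C]_n) : 'M[C]_n :=
  (\tr (rpowmx rho a))^-1 *: rpowmx rho a.

End QInfo.

From HB Require Import structures.
From mathcomp Require Import all_boot all_order all_algebra.
From mathcomp Require Import complex.
From mathcomp Require Import reals exp.
From mathcomp Require Import ring.
Set Implicit Arguments. Unset Strict Implicit. Unset Printing Implicit Defensive.
Import Order.TTheory GRing.Theory Num.Theory.
Local Open Scope ring_scope.
Local Open Scope sesquilinear_scope.

(** Raising the escort of [rho] to [1/a] gives back [rho] scaled
    by [(Tr rho^a)^(-1/a)], and raising the escort of [sigma] to [1 - 1/a]
    gives [sigma^(a-1)] scaled by [(Tr sigma^a)^(1/a - 1)]; so the Petz trace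
    is a positive multiple of [Tr (rho sigma^(a-1))] and the identity reduces
    to arithmetic with logarithms.  That [Tr (rho sigma^(a-1))] is positive
    comes from the support hypothesis: [rho] is fixed by the projection onto
    [supp sigma], so the diagonal of [rho] in the eigenbasis of [sigma], which
    sums to [Tr rho = 1], has a positive entry at a positive eigenvalue. *)

Lemma map_diag_mx_intertwine (F : idomainType) m n (U : 'M[F]_(m, n))
    (d : 'rV[F]_n) (e : 'rV[F]_m) (f : F -> F) :
  U *m diag_mx d = diag_mx e *m U ->
  U *m diag_mx (map_mx f d) = diag_mx (map_mx f e) *m U.
Proof.
move=> /matrixP dU; apply/matrixP => i j; have := dU i j.
rewrite !mul_mx_diag !mul_diag_mx !mxE.
have [->|Uij] := eqVneq (U i j) 0; first by rewrite !mulr0 !mul0r.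
by rewrite [e 0 i * _]mulrC => /(mulfI Uij) ->; rewrite mulrC.
Qed.

Lemma psumr_gt0 (K : numDomainType) (I : finType) (F : I -> K) k :
  (forall i, 0 <= F i) -> 0 < F k -> 0 < \sum_i F i.
Proof. by move=> F_ge0 Fk_gt0; rewrite (bigD1 k) //= ltr_wpDr ?sumr_ge0. Qed.

Lemma mxtrace_mul_conj_diag (K : comPzRingType) n (A P Q : 'M[K]_n) (y : 'rV[K]_n) :
  \tr (A *m (P *m diag_mx y *m Q)) = \sum_k (Q *m A *m P) k k * y 0 k.
Proof.
rewrite !mulmxA mxtrace_mulC !mulmxA; apply: eq_bigr => k _.
by rewrite mul_mx_diag mxE.
Qed.

Section Unitary.
Variable C : numClosedFieldType.

Lemma unitarymx_trCmul n (P : 'M[C]_n) : P \is unitarymx -> P^t* *m P = 1%:M.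
Proof. by move=> PU; rewrite -[P^t*]mul1mx mulmxKtV. Qed.

Lemma normalmx_spectral_decomp n (A : 'M[C]_n) : A \is normalmx ->
  A = (spectralmx A)^t* *m diag_mx (spectral_diag A) *m spectralmx A.
Proof.
by move/orthomx_spectralP => {1}->; rewrite invmx_unitary ?spectral_unitarymx.
Qed.

Lemma mxtrace_unitary_conj n (P B : 'M[C]_n) :
  P \is unitarymx -> \tr (P^t* *m B *m P) = \tr B.
Proof. by move=> PU; rewrite mxtrace_mulC mulmxA (unitarymxP PU) mul1mx. Qed.

(* [P Q^t*] intertwines [diag_mx e] with [diag_mx d], hence also their images under [f]. *)
Lemma unitary_diag_map n (P Q : 'M[C]_n) (d e : 'rV[C]_n) (f : C -> C) :
  P \is unitarymx -> Q \is unitarymx ->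
  P^t* *m diag_mx d *m P = Q^t* *m diag_mx e *m Q ->
  P^t* *m diag_mx (map_mx f d) *m P = Q^t* *m diag_mx (map_mx f e) *m Q.
Proof.
move=> PU QU PdQe.
have dU : P *m Q^t* *m diag_mx e = diag_mx d *m (P *m Q^t*).
  have := congr1 (fun M => P *m M *m Q^t*) PdQe => /=.
  by rewrite !mulmxA (unitarymxP PU) mul1mx mulmxtVK // => <-; rewrite mulmxA.
have fdU := map_diag_mx_intertwine f dU.
rewrite -[X in _ *m X = _](mulmxKtV P QU erefl) mulmxA.
by rewrite -[P^t* *m _ *m (P *m _)]mulmxA -fdU !mulmxA (unitarymx_trCmul PU) mul1mx.
Qed.

End Unitary.

Section DensityOperators.
Variable R : realType.
Local Notation C := R[i].

Lemma mxfun_unitary_diag n (f : C -> C) (P : 'M[C]_n) d (A : 'M[C]_n) :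
  P \is unitarymx -> A = P^t* *m diag_mx d *m P ->
  mxfun f A = P^t* *m diag_mx (map_mx f d) *m P.
Proof.
move=> PU AE; have An : A \is normalmx.
  by apply/orthomx_spectral_subproof; exists (P, d); rewrite //= invmx_unitary.
rewrite /mxfun; apply: (unitary_diag_map f (spectral_unitarymx A) PU).
by rewrite -normalmx_spectral_decomp.
Qed.

Definition conjdiag n (P : 'M[C]_n) (x : 'I_n -> R) : 'M[C]_n :=
  P^t* *m diag_mx (\row_i ((x i)%:C)%C) *m P.

Lemma eq_conjdiag n (P : 'M[C]_n) (x y : 'I_n -> R) :
  (forall i, x i = y i) -> conjdiag P x = conjdiag P y.
Proof.
move=> xy; rewrite /conjdiag.
suff -> : \row_i ((x i)%:C)%C = \row_i ((y i)%:C)%C :> 'rV[C]_n by [].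
by apply/rowP => i; rewrite !mxE xy.
Qed.

Lemma mxfun_conjdiag n (f : C -> C) (g : R -> R) (P : 'M[C]_n) x :
  P \is unitarymx -> (forall r, f ((r%:C)%C) = ((g r)%:C)%C) ->
  mxfun f (conjdiag P x) = conjdiag P (fun i => g (x i)).
Proof.
move=> PU fg; rewrite (mxfun_unitary_diag _ PU erefl) /conjdiag.
suff -> : map_mx f (\row_i ((x i)%:C)%C) = \row_i ((g (x i))%:C)%C by [].
by apply/rowP => i; rewrite !mxE fg.
Qed.

Lemma rpowmx_conjdiag n (P : 'M[C]_n) x p : P \is unitarymx ->
  rpowmx (conjdiag P x) p = conjdiag P (fun i => x i `^ p).
Proof. by move=> PU; rewrite /rpowmx (@mxfun_conjdiag _ _ (fun r => r `^ p)). Qed.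

Lemma scale_conjdiag n (P : 'M[C]_n) x (c : R) :
  (c%:C)%C *: conjdiag P x = conjdiag P (fun i => c * x i).
Proof.
rewrite /conjdiag scalemxAl scalemxAr.
suff -> : (c%:C)%C *: diag_mx (\row_i ((x i)%:C)%C) =
  diag_mx (\row_i ((c * x i)%:C)%C) :> 'M[C]_n by [].
by apply/matrixP => i j; rewrite !mxE mulrnAr rmorphM.
Qed.

Lemma mxtrace_conjdiag n (P : 'M[C]_n) x : P \is unitarymx ->
  \tr (conjdiag P x) = ((\sum_i x i)%:C)%C.
Proof.
move=> PU; rewrite mxtrace_unitary_conj // mxtrace_diag rmorph_sum.
by apply: eq_bigr => i _; rewrite mxE.
Qed.

Lemma trR_scale n (c : R) (A : 'M[C]_n) : trR ((c%:C)%C *: A) = c * trR A.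
Proof. by rewrite /trR mxtraceZ; case: (\tr A) => u v /=; rewrite mul0r subr0. Qed.

Lemma psdmx_normal n (A : 'M[C]_n) : psdmx A -> A \is normalmx.
Proof. by case=> /hermitian_normalmx. Qed.

Lemma psdmx_conj_diag_ge0 n (A Q : 'M[C]_n) k :
  psdmx A -> 0 <= (Q *m A *m Q^t*) k k.
Proof.
case=> _ /(_ (row k Q)); congr (0 <= _).
by rewrite -row_mul !mxE; apply: eq_bigr => l _; rewrite !mxE.
Qed.

Lemma psdmx_conjdiagP n (A : 'M[C]_n) : psdmx A ->
  exists2 P, P \is unitarymx & exists2 x, (forall i, 0 <= x i) & A = conjdiag P x.
Proof.
move=> Apsd; set P := spectralmx A; set d := spectral_diag A.
have PU : P \is unitarymx := spectral_unitarymx A.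
have AE : A = P^t* *m diag_mx d *m P.
  exact/normalmx_spectral_decomp/psdmx_normal.
have d_ge0 i : 0 <= d 0 i.
  have := psdmx_conj_diag_ge0 P i Apsd.
  by rewrite [in A in P *m A]AE !mulmxA (unitarymxP PU) mul1mx mulmxtVK // mxE eqxx.
have dE i : d 0 i = ((complex.Re (d 0 i))%:C)%C.
  by case: (d 0 i) (ger0_Im (d_ge0 i)) => u v /= ->.
exists P => //; exists (fun i => complex.Re (d 0 i)) => [i|].
  by rewrite -ler0c -dE.
rewrite AE /conjdiag.
suff -> : \row_i ((complex.Re (d 0 i))%:C)%C = d by [].
by apply/rowP => i; rewrite mxE -dE.
Qed.

Lemma rpowmx1 n (A : 'M[C]_n) : psdmx A -> rpowmx A 1 = A.
Proof.
move=> /psdmx_conjdiagP [P PU [x x_ge0 ->]]; rewrite (rpowmx_conjdiag _ _ PU).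
by apply: eq_conjdiag => i; rewrite powRr1.
Qed.

Lemma rpowmx_escort n (A : 'M[C]_n) a b : psdmx A ->
  rpowmx (escort a A) b = (((trR (rpowmx A a))^-1 `^ b)%:C)%C *: rpowmx A (a * b).
Proof.
move=> /psdmx_conjdiagP [P PU [x x_ge0 ->]].
rewrite /escort /trR !rpowmx_conjdiag // mxtrace_conjdiag //= -fmorphV.
rewrite !scale_conjdiag (rpowmx_conjdiag _ _ PU); apply: eq_conjdiag => i.
rewrite powRM ?powRrM ?powR_ge0 // invr_ge0.
by apply: sumr_ge0 => j _; exact: powR_ge0.
Qed.

Lemma density_trR_rpowmx_gt0 n (A : 'M[C]_n) a : density A -> 0 < trR (rpowmx A a).
Proof.
move=> [/psdmx_conjdiagP [P PU [x x_ge0 AE]] trA].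
have x_sum1 : \sum_i x i = 1.
  by have := congr1 (@complex.Re R) trA; rewrite AE mxtrace_conjdiag.
have : \sum_i x i != 0 by rewrite x_sum1 oner_neq0.
case/eqP/psumr_neq0P => [i _|i /andP [_ xi_gt0]]; first exact: x_ge0.
rewrite AE /trR (rpowmx_conjdiag _ _ PU) mxtrace_conjdiag //=.
by apply: (@psumr_gt0 _ _ (fun j => x j `^ a) i) => [j|]; rewrite ?powR_ge0 ?powR_gt0.
Qed.

Definition suppproj n (A : 'M[C]_n) : 'M[C]_n := mxfun (fun z => (z != 0)%:R) A.

Lemma normalmx_sub_supp n (A : 'M[C]_n) : A \is normalmx -> (A <= supp A)%MS.
Proof.
move=> An; set P := spectralmx A; set d := spectral_diag A.
have PU : P \is unitarymx := spectral_unitarymx A.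
have AE := normalmx_spectral_decomp An; rewrite -/P -/d in AE.
rewrite {1}AE -mulmxA; apply: submx_trans (submxMl _ _) _.
apply/row_subP => i; rewrite row_mul row_diag_mx -scalemxAl -rowE.
have [->|di] := eqVneq (d 0 i) 0; first by rewrite scale0r sub0mx.
apply/scalemx_sub/(sumsmx_sup i) => //; apply/eigenspaceP.
rewrite [in LHS]AE !mulmxA -row_mul (unitarymxP PU) -row_mul mul1mx.
by rewrite row_diag_mx -scalemxAl -rowE.
Qed.

Lemma supp_mul_suppproj m n (A : 'M[C]_n) (B : 'M[C]_(m, n)) : A \is normalmx ->
  (B <= supp A)%MS -> B *m suppproj A = B.
Proof.
move=> An BA; set Q := spectralmx A; set d := spectral_diag A.
have QU : Q \is unitarymx := spectral_unitarymx A.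
have AE := normalmx_spectral_decomp An; rewrite -/Q -/d in AE.
suff : (supp A <= kermx (1%:M - suppproj A))%MS.
  by move=> /(submx_trans BA); rewrite sub_kermx mulmxBr mulmx1 subr_eq0 => /eqP <-.
apply/sumsmx_subP => j dj_neq0; set W := eigenspace A _.
have /eigenspaceP WA : (W <= eigenspace A (d 0 j))%MS := submx_refl W.
have WQd : W *m Q^t* *m diag_mx d = diag_mx (const_mx (d 0 j)) *m (W *m Q^t*).
  by rewrite diag_const_mx mul_scalar_mx scalemxAl -WA AE !mulmxA mulmxtVK.
have := map_diag_mx_intertwine (fun z => (z != 0)%:R) WQd.
rewrite map_const_mx diag_const_mx mul_scalar_mx dj_neq0 scale1r => WQind.
by rewrite sub_kermx mulmxBr mulmx1 /suppproj /mxfun !mulmxA WQind mulmxKtV ?subrr.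
Qed.

Lemma suppproj_conjdiag n (Q : 'M[C]_n) y : Q \is unitarymx ->
  suppproj (conjdiag Q y) = conjdiag Q (fun k => (y k != 0)%:R).
Proof.
move=> QU; apply: (@mxfun_conjdiag _ _ (fun r => (r != 0)%:R)) => // r.
by rewrite fmorph_eq0 rmorph_nat.
Qed.

Lemma mxtrace_psd_mul_conjdiag n (A Q : 'M[C]_n) y : psdmx A ->
  \tr (A *m conjdiag Q y) = ((\sum_k complex.Re ((Q *m A *m Q^t*) k k) * y k)%:C)%C.
Proof.
move=> Apsd; rewrite mxtrace_mul_conj_diag rmorph_sum; apply: eq_bigr => k _.
have /ger0_Im := psdmx_conj_diag_ge0 Q k Apsd.
by rewrite [X in _ * X]mxE rmorphM; case: ((Q *m A *m Q^t*) k k) => u v /= ->.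
Qed.

Lemma trR_mul_rpowmx_gt0 n (rho sigma : 'M[C]_n) p : density rho -> density sigma ->
  (supp rho <= supp sigma)%MS -> 0 < trR (rho *m rpowmx sigma p).
Proof.
move=> [rho_psd tr_rho] [sigma_psd _] supp_rs.
have rho_supp : rho *m suppproj sigma = rho.
  apply: supp_mul_suppproj; first exact: psdmx_normal.
  exact: submx_trans (normalmx_sub_supp (psdmx_normal rho_psd)) supp_rs.
have [Q QU [y y_ge0 sigmaE]] := psdmx_conjdiagP sigma_psd.
pose m k := complex.Re ((Q *m rho *m Q^t*) k k).
have m_ge0 k : 0 <= m k.
  by have := psdmx_conj_diag_ge0 Q k rho_psd; rewrite lecE => /andP[].
have m_supp_sum1 : \sum_k m k * (y k != 0)%:R = 1.
  have := congr1 (@complex.Re R) tr_rho.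
  by rewrite -[in LHS]rho_supp sigmaE suppproj_conjdiag // mxtrace_psd_mul_conjdiag.
have [k mk_gt0 yk_neq0] : exists2 k, 0 < m k & y k != 0.
  have : \sum_k m k * (y k != 0)%:R != 0 by rewrite m_supp_sum1 oner_neq0.
  case/eqP/psumr_neq0P => [k _|k /andP [_]]; first by rewrite mulr_ge0.
  have [_|yk_neq0] := eqVneq (y k) 0; first by rewrite /= mulr0 ltxx.
  by rewrite /= mulr1 => mk_gt0; exists k.
rewrite /trR sigmaE (rpowmx_conjdiag _ _ QU) mxtrace_psd_mul_conjdiag //=.
apply: (@psumr_gt0 _ _ (fun j => m j * y j `^ p) k) => [j|]; first by rewrite mulr_ge0 ?powR_ge0.
by rewrite mulr_gt0 // powR_gt0 // lt_def yk_neq0 y_ge0.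
Qed.

End DensityOperators.

Lemma alpha_log_identity (R : realType) (a T tA tB : R) :
  0 < a -> a != 1 -> 0 < T -> 0 < tA -> 0 < tB ->
  a / (1 - a) * ln T - 1 / (1 - a) * ln tA + ln tB =
  1 / (1 / a - 1) * ln (tA^-1 `^ (1 / a) * (tB^-1 `^ (1 - 1 / a) * T)).
Proof.
move=> a_gt0 a_neq1 T_gt0 tA_gt0 tB_gt0.
have a_neq0 : a != 0 by rewrite gt_eqF.
have a1_neq0 : 1 - a != 0 by rewrite subr_eq0 eq_sym.
have k1_gt0 : 0 < tA^-1 `^ (1 / a) by rewrite powR_gt0 ?invr_gt0.
have k2_gt0 : 0 < tB^-1 `^ (1 - 1 / a) by rewrite powR_gt0 ?invr_gt0.
rewrite lnM ?posrE ?mulr_gt0 // lnM ?posrE // !ln_powR lnV ?posrE // lnV ?posrE //.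
by field; rewrite a_neq0 mulN1r a1_neq0.
Qed.

Theorem lemma9 (R : realType) (n : nat) (a : R) (rho sigma : 'M[R[i]]_n) :
  0 < a -> a != 1 ->
  density rho -> density sigma ->
  (supp rho <= supp sigma)%MS ->
  S_alpha a rho sigma = petzD (1 / a) (escort a rho) (escort a sigma).
Proof.
move=> a_gt0 a_neq1 rho_d sigma_d supp_rs.
have [[rho_psd _] [sigma_psd _]] := (rho_d, sigma_d).
have a_neq0 : a != 0 by rewrite gt_eqF.
have aE1 : a * (1 / a) = 1 by rewrite mul1r mulfV.
have aE2 : a * (1 - 1 / a) = a - 1 by rewrite mulrBr mulr1 aE1.
rewrite /petzD (rpowmx_escort _ _ rho_psd) (rpowmx_escort _ _ sigma_psd) aE1 aE2.
rewrite (rpowmx1 rho_psd) -scalemxAl -scalemxAr !trR_scale /S_alpha.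
by apply: alpha_log_identity; rewrite ?density_trR_rpowmx_gt0 ?trR_mul_rpowmx_gt0.
Qed.
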